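(* Let $R$ be a left noetherian domain and let $A=\sigma(R)\langle x_1,\dots,x_n\rangle$ be a quasi-commutative bijective skew PBW extension of $R$. (i) If $f=c\,x^{\alpha}h\in A$, where $c\in R^*$ is a unit of $R$ that is normal in $R$ (i.e. $cR=Rc$), $x^\alpha\in\mathrm{Mon}(A)$, and $h\in Z(A)$ (the center of $A$), then $f$ is normal in $A$. (ii) If $f=c_1x^{\alpha_1}+\cdots+c_tx^{\alpha_t}\in A$ with $c_i\in R\setminus\{0\}$ and pairwise distinct standard monomials $x^{\alpha_1},\dots,x^{\alpha_t}$, and $f$ is normal in $A$, then each $c_i$ is normal in $R$, i.e. $c_iR=Rc_i$ for every $1\le i\le t$.
   Context: Skew PBW extension: a ring $A$ is a skew PBW extension of a ring $R$, written $A=\sigma(R)\langle x_1,\dots,x_n\rangle$, if (1) $R\subseteq A$ is a subring; (2) there are $x_1,\dots,x_n\in A$ such that $A$ is a free left $R$-module with basis $\mathrm{Mon}(A)=\{x^\alpha=x_1^{\alpha_1}\cdots x_n^{\alpha_n}:\alpha\in\mathbb N^n\}$ (the standard monomials); (3) for every $i$ and every $r\in R\setminus\{0\}$ there is $c_{i,r}\in R\setminus\{0\}$ with $x_ir-c_{i,r}x_i\in R$; (4) for every $i,j$ there is $c_{i,j}\in R\setminus\{0\}$ with $x_jx_i-c_{i,j}x_ix_j\in R+Rx_1+\cdots+Rx_n$. For each $i$ there are then an injective ring endomorphism $\sigma_i$ of $R$ and a $\sigma_i$-derivation $\delta_i$ of $R$ with $x_ir=\sigma_i(r)x_i+\delta_i(r)$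 for all $r\in R$. $A$ is bijective if every $\sigma_i$ is bijective and every $c_{i,j}$ is invertible. $A$ is quasi-commutative if conditions (3),(4) are replaced by: for every $i$ and $r\in R\setminus\{0\}$ there is $c_{i,r}\in R\setminus\{0\}$ with $x_ir=c_{i,r}x_i$, and for every $i,j$ there is $c_{i,j}\in R\setminus\{0\}$ with $x_jx_i=c_{i,j}x_ix_j$ (so all $\delta_i=0$). Under these hypotheses $A$ is a domain. An element $f$ of a ring $B$ is normal if $Bf=fB$. *)

From HB Require Import structures.
From mathcomp Require Import all_boot all_order all_algebra.
Set Implicit Arguments. Unset Strict Implicit. Unset Printing Implicit Defensive.
Import GRing.Theory.
Local Open Scope ring_scope.

Definition is_unit (R : nzRingType) (c : R) : Prop :=
  exists d : R, c * d = 1 /\ d * c = 1.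

(* f is normal in B : B f = f B (equality of the sets {b f} and {f b}). *)
Definition normal_elt (B : nzRingType) (f : B) : Prop :=
  (forall b : B, exists b' : B, b * f = f * b') /\
  (forall b : B, exists b' : B, f * b = b' * f).

Definition central (B : nzRingType) (h : B) : Prop :=
  forall a : B, h * a = a * h.

(* (Noncommutative) domain: no zero divisors (nontriviality is built into nzRingType). *)
Definition domain (R : nzRingType) : Prop :=
  forall a b : R, a * b = 0 -> a = 0 \/ b = 0.

Definition left_ideal (R : nzRingType) (I : R -> Prop) : Prop :=
  [/\ I 0, (forall a b, I a -> I b -> I (a + b)) & (forall r a, I a -> I (r * a))].

Definition left_noetherian (R : nzRingType) : Prop :=
  forall I : nat -> R -> Prop,
    (forall k, left_ideal (I k)) ->
    (forall k a, I k a -> I k.+1 a) ->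
    exists N : nat, forall m, (N <= m)%N -> forall a, I m a -> I N a.

Definition exps (n : nat) := {ffun 'I_n -> nat}.

Definition mon (A : nzRingType) (n : nat) (x : 'I_n -> A) (alpha : exps n) : A :=
  \prod_(i < n) x i ^+ alpha i.

(* A is a free left R-module (R embedded via iota) with basis Mon(A). *)
Definition mon_basis (R A : nzRingType) (iota : {rmorphism R -> A})
    (n : nat) (x : 'I_n -> A) : Prop :=
  (forall a : A, exists (s : seq (exps n)) (c : exps n -> R),
      a = \sum_(al <- s) iota (c al) * mon x al) /\
  (forall (s : seq (exps n)) (c : exps n -> R), uniq s ->
      \sum_(al <- s) iota (c al) * mon x al = 0 ->
      forall al, al \in s -> c al = 0).

(* A = sigma(R)<x_1,...,x_n> is a quasi-commutative bijective skew PBW extension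
   of R, where R is identified with the subring iota(R) of A. *)
Definition qc_bijective_skewPBW (R A : nzRingType) (iota : {rmorphism R -> A})
    (n : nat) (x : 'I_n -> A) : Prop :=
  [/\ injective iota,
      mon_basis iota x,
      (forall i (r : R), r != 0 -> exists c : R, c != 0 /\ x i * iota r = iota c * x i),
      (forall i j, exists c : R, c != 0 /\ is_unit c /\ x j * x i = iota c * x i * x j)
    &
      (forall i, exists sigma : R -> R, bijective sigma /\
          forall r : R, x i * iota r = iota (sigma r) * x i)].

(* (i)  Units and central elements are normal, and products of normal elements
        are normal, so it suffices that every variable x_i is normal.  Since
        the twisting maps sigma_i are onto and the variables commute up to
        scalars, x_i can be moved past every element of R and every x_j, in
        both directions; such elements form subrings, and R and the x_j
        generate A.

   (ii) Let f = sum_k c_k x^(alpha_k) be normal, and r in R.  Write r f = f b.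
        Expanding b = sum_beta d_beta x^beta, each product
        c_k x^(alpha_k) d_beta x^beta is a nonzero multiple of
        x^(alpha_k + beta) (quasi-commutativity over a domain).  Comparing the
        top terms for a monomial order (realised by a base-B encoding of
        exponents) shows that only beta = 0 occurs, so b is a scalar D;
        comparing coefficients in r f = f D gives r c_k = c_k sigma^(alpha_k)(D).
        Symmetrically f r0 = b f, with r0 chosen so that x^(alpha_k) r0 =
        r x^(alpha_k), gives c_k r = D c_k. *)

From mathcomp Require Import all_boot all_order all_algebra zify.
Set Implicit Arguments. Unset Strict Implicit. Unset Printing Implicit Defensive.
Import GRing.Theory.
Local Open Scope ring_scope.

(* Normal elements of an arbitrary ring: products, units and central elements
   are normal, and for a fixed f the elements a with a f = f a' (resp. with
   f a = a' f) for some a' form a subring, so these conditions can be checked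
   on ring generators. *)
Section NormalElements.
Variable B : nzRingType.

Lemma normal_mul (a b : B) : normal_elt a -> normal_elt b -> normal_elt (a * b).
Proof.
move=> [Ha1 Ha2] [Hb1 Hb2]; split => c.
  have [c1 E1] := Ha1 c; have [c2 E2] := Hb1 c1.
  by exists c2; rewrite mulrA E1 -mulrA E2 mulrA.
have [c1 E1] := Hb2 c; have [c2 E2] := Ha2 c1.
by exists c2; rewrite -mulrA E1 mulrA E2 mulrA.
Qed.

Lemma normal1 : normal_elt (1 : B).
Proof. by split => c; exists c; rewrite mul1r mulr1. Qed.

Lemma central_normal (h : B) : central h -> normal_elt h.
Proof. by move=> Hh; split => c; exists c; rewrite Hh. Qed.

Lemma unit_normal (u : B) : is_unit u -> normal_elt u.
Proof.
move=> [v [uv vu]]; split => b.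
  by exists (v * b * u); rewrite !mulrA uv mul1r.
by exists (u * b * v); rewrite -!mulrA vu mulr1.
Qed.

Definition passes_left (f a : B) : Prop := exists a', a * f = f * a'.
Definition passes_right (f a : B) : Prop := exists a', f * a = a' * f.

Lemma passes_left0 f : passes_left f 0.
Proof. by exists 0; rewrite mulr0 mul0r. Qed.

Lemma passes_leftD f a b :
  passes_left f a -> passes_left f b -> passes_left f (a + b).
Proof. by move=> [a' Ea] [b' Eb]; exists (a' + b'); rewrite mulrDr mulrDl Ea Eb. Qed.

Lemma passes_leftM f a b :
  passes_left f a -> passes_left f b -> passes_left f (a * b).
Proof. by move=> [a' Ea] [b' Eb]; exists (a' * b'); rewrite -mulrA Eb mulrA Ea mulrA. Qed.

Lemma passes_right0 f : passes_right f 0.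
Proof. by exists 0; rewrite mulr0 mul0r. Qed.

Lemma passes_rightD f a b :
  passes_right f a -> passes_right f b -> passes_right f (a + b).
Proof. by move=> [a' Ea] [b' Eb]; exists (a' + b'); rewrite mulrDr mulrDl Ea Eb. Qed.

Lemma passes_rightM f a b :
  passes_right f a -> passes_right f b -> passes_right f (a * b).
Proof. by move=> [a' Ea] [b' Eb]; exists (a' * b'); rewrite mulrA Ea -mulrA Eb mulrA. Qed.

End NormalElements.

Lemma rmorph_is_unit (R A : nzRingType) (iota : {rmorphism R -> A}) (c : R) :
  is_unit c -> is_unit (iota c).
Proof.
by move=> [d [cd dc]]; exists (iota d); rewrite -!rmorphM cd dc rmorph1.
Qed.

Lemma domain_mul_neq0 (R : nzRingType) (a b : R) :
  domain R -> a != 0 -> b != 0 -> a * b != 0.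
Proof. by move=> dom a0 b0; apply/eqP => /dom [] /eqP; apply/negP. Qed.

(* Exponent vectors form an additive monoid; addx a b is the exponent of x^a x^b
   up to a scalar factor. *)
Definition addx n (a b : exps n) : exps n := [ffun i => (a i + b i)%N].
Definition zerox n : exps n := [ffun => 0%N].

Lemma addxC n (a b : exps n) : addx a b = addx b a.
Proof. by apply/ffunP => i; rewrite !ffunE addnC. Qed.

Lemma mon0 (A : nzRingType) n (x : 'I_n -> A) : mon x (zerox n) = 1.
Proof. by rewrite /mon big1 // => i _; rewrite ffunE expr0. Qed.

Lemma mon_ind (A : nzRingType) n (x : 'I_n -> A) (P : A -> Prop) :
  P 1 -> (forall a b, P a -> P b -> P (a * b)) -> (forall i, P (x i)) ->
  forall al, P (mon x al).
Proof.
move=> P1 PM Px al; apply: big_ind => // i _.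
by elim: (al i) => [|k IH]; rewrite ?expr0 // exprS; apply: PM.
Qed.

Lemma sum_pred1_uniq (V : nmodType) (I : eqType) (r : seq I) (j : I) (F : I -> V) :
  uniq r -> j \in r -> \sum_(i <- r | i == j) F i = F j.
Proof.
by move=> ur jr; rewrite -big_filter (@filter_pred1_uniq _ r j) // big_seq1.
Qed.

Section Combinations.
Variables (R A : nzRingType) (iota : {rmorphism R -> A}) (n : nat) (x : 'I_n -> A).

Lemma generated_ind (P : A -> Prop) :
  (forall a : A, exists (s : seq (exps n)) (c : exps n -> R),
      a = \sum_(al <- s) iota (c al) * mon x al) ->
  P 0 -> (forall a b, P a -> P b -> P (a + b)) -> (forall a b, P a -> P b -> P (a * b)) ->
  (forall r, P (iota r)) -> (forall j, P (x j)) ->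
  forall a, P a.
Proof.
move=> span P0 PD PM Pr Px a; have [s [d ->]] := span a.
apply: big_ind => // al _; apply: (PM) => //.
by apply: mon_ind => //; move: (Pr 1); rewrite rmorph1.
Qed.

Lemma regroup_comb (I : eqType) (r : seq I) (a : I -> R) (m : I -> exps n)
    (L : seq (exps n)) :
  uniq L -> (forall i, i \in r -> m i \in L) ->
  \sum_(i <- r) iota (a i) * mon x (m i) =
  \sum_(g <- L) iota (\sum_(i <- r | m i == g) a i) * mon x g.
Proof.
move=> uL rL.
rewrite [RHS](eq_bigr (fun g => \sum_(i <- r)
    (if m i == g then iota (a i) * mon x (m i) else 0))) => [|g _]; last first.
  rewrite rmorph_sum mulr_suml big_mkcond; apply: eq_bigr => i _.
  by case: eqP => [->|]; rewrite ?mul0r.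
rewrite exchange_big; apply: eq_big_seq => i ri.
rewrite -big_mkcond /= (eq_bigl (fun g => g == m i)) => [|g]; last by rewrite eq_sym.
by rewrite sum_pred1_uniq // rL.
Qed.

Lemma reduced_comb (s0 : seq (exps n)) (d : exps n -> R) :
  exists s (d' : exps n -> R), [/\ uniq s, (forall b, b \in s -> d' b != 0) &
   \sum_(b <- s0) iota (d b) * mon x b = \sum_(b <- s) iota (d' b) * mon x b].
Proof.
pose c g := \sum_(b <- s0 | b == g) d b.
exists [seq g <- undup s0 | c g != 0], c; split.
- by rewrite filter_uniq // undup_uniq.
- by move=> b; rewrite mem_filter => /andP [].
rewrite (@regroup_comb _ s0 d id (undup s0)) ?undup_uniq // => [|i]; last by rewrite mem_undup.
rewrite big_filter [RHS]big_mkcond; apply: eq_bigr => g _.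
by rewrite /c; case: eqP => [->|] //=; rewrite rmorph0 mul0r.
Qed.

Lemma scalar_of_zero_exponents (b : A) :
  (exists (s0 : seq (exps n)) (d : exps n -> R), b = \sum_(al <- s0) iota (d al) * mon x al) ->
  (forall s (d : exps n -> R), uniq s -> (forall al, al \in s -> d al != 0) ->
     b = \sum_(al <- s) iota (d al) * mon x al -> forall al, al \in s -> al = zerox n) ->
  exists D, b = iota D.
Proof.
move=> [s0 [d0 ->]] zero_exps; have [s [d [us d_nz E]]] := reduced_comb s0 d0.
exists (\sum_(al <- s) d al); rewrite E rmorph_sum; apply: eq_big_seq => al als.
by rewrite (zero_exps s d us d_nz E al als) mon0 mulr1.
Qed.

Hypothesis mon_free : forall (s : seq (exps n)) (c : exps n -> R), uniq s ->
  \sum_(al <- s) iota (c al) * mon x al = 0 -> forall al, al \in s -> c al = 0.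

Lemma coef_eq (I1 I2 : eqType) (r1 : seq I1) (r2 : seq I2) (a1 : I1 -> R) (a2 : I2 -> R)
    (m1 : I1 -> exps n) (m2 : I2 -> exps n) :
  \sum_(i <- r1) iota (a1 i) * mon x (m1 i) = \sum_(j <- r2) iota (a2 j) * mon x (m2 j) ->
  forall g, \sum_(i <- r1 | m1 i == g) a1 i = \sum_(j <- r2 | m2 j == g) a2 j.
Proof.
move=> E g.
pose L := undup ([seq m1 i | i <- r1] ++ [seq m2 j | j <- r2]).
have uL : uniq L by apply: undup_uniq.
have L1 i : i \in r1 -> m1 i \in L by move=> ir; rewrite mem_undup mem_cat map_f.
have L2 j : j \in r2 -> m2 j \in L by move=> jr; rewrite mem_undup mem_cat map_f ?orbT.
rewrite (regroup_comb a1 uL L1) (regroup_comb a2 uL L2) in E.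
case gL: (g \in L); last first.
  rewrite !big1_seq // => i /andP [/eqP eg ir].
    by move: (L2 i ir); rewrite eg gL.
  by move: (L1 i ir); rewrite eg gL.
apply/eqP; rewrite -subr_eq0; apply/eqP.
apply: (mon_free (c := fun g =>
  \sum_(i <- r1 | m1 i == g) a1 i - \sum_(j <- r2 | m2 j == g) a2 j) uL) => //.
by under eq_bigr => h _ do rewrite rmorphB mulrBl; rewrite sumrB E subrr.
Qed.

Lemma coef_eq_inj (t : nat) (alpha : 'I_t -> exps n) (a1 a2 : 'I_t -> R) :
  injective alpha ->
  \sum_(k < t) iota (a1 k) * mon x (alpha k) = \sum_(k < t) iota (a2 k) * mon x (alpha k) ->
  forall k, a1 k = a2 k.
Proof.
move=> ainj E k; have := coef_eq E (alpha k).
have single (F : 'I_t -> R) : \sum_(i <- index_enum 'I_t | alpha i == alpha k) F i = F k.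
  rewrite (eq_bigl (fun i => i == k)) => [|i]; last by rewrite (inj_eq ainj).
  by rewrite sum_pred1_uniq ?index_enum_uniq ?mem_index_enum.
by rewrite !single.
Qed.

Lemma term_coef_inj (a b : R) (al : exps n) :
  iota a * mon x al = iota b * mon x al -> a = b.
Proof.
move=> E; apply/eqP; rewrite -subr_eq0; apply/eqP.
apply: (mon_free (c := fun _ => a - b) (s := [:: al])) (mem_head _ _) => //.
by rewrite big_seq1 rmorphB mulrBl E subrr.
Qed.

End Combinations.

(* A monomial order in disguise: reading an exponent vector as the digits of a
   base-B number gives an additive map exps n -> nat which is injective on
   vectors with all entries below B. *)
Section Encoding.
Variables (B n : nat).

Definition encs (l : seq nat) : nat := foldr (fun a acc => a + B * acc)%N 0%N l.
Definition enc (a : exps n) : nat := encs [seq a i | i <- index_enum 'I_n].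

Lemma encD (a b : exps n) : enc (addx a b) = (enc a + enc b)%N.
Proof.
rewrite /enc; elim: (index_enum 'I_n) => //= i l ->.
by rewrite ffunE mulnDr; lia.
Qed.

Lemma encs_inj (I : eqType) (l : seq I) (f g : I -> nat) :
  (forall i, i \in l -> f i < B)%N -> (forall i, i \in l -> g i < B)%N ->
  encs [seq f i | i <- l] = encs [seq g i | i <- l] -> forall i, i \in l -> f i = g i.
Proof.
elim: l => //= a l IH Hf Hg E i.
have fa := Hf a (mem_head _ _); have ga := Hg a (mem_head _ _).
have Ea : f a = g a.
  have := congr1 (modn^~ B) E => /=.
  by rewrite ![(_ + B * _)%N]addnC ![(B * _)%N]mulnC !modnMDl !modn_small.
have El : encs [seq f i | i <- l] = encs [seq g i | i <- l].
  by move/eqP: E; rewrite Ea eqn_add2l eqn_mul2l => /orP [|/eqP //]; lia.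
rewrite in_cons => /orP [/eqP -> //|il].
by apply: IH => // j jl; [apply: Hf | apply: Hg]; rewrite in_cons jl orbT.
Qed.

Lemma enc_inj (a b : exps n) :
  (forall i, a i < B)%N -> (forall i, b i < B)%N -> enc a = enc b -> a = b.
Proof.
move=> Ha Hb E; apply/ffunP => i.
by apply: (encs_inj (l := index_enum 'I_n) _ _ E); rewrite ?mem_index_enum.
Qed.

Lemma enc_eq0 (a : exps n) : (0 < B)%N -> enc a = 0%N -> a = zerox n.
Proof.
move=> Bp; rewrite /enc => E; apply/ffunP => i; rewrite ffunE.
have : i \in index_enum 'I_n by rewrite mem_index_enum.
elim: (index_enum 'I_n) E => //= j l IH E.
move/eqP: E; rewrite addn_eq0 muln_eq0 => /andP [/eqP aj /orP [|/eqP El]]; first by lia.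
by rewrite in_cons => /orP [/eqP ->|/(IH El)].
Qed.

Lemma addx_max_cancel (b b' a a' : exps n) :
  (forall i, b i < B)%N -> (forall i, b' i < B)%N ->
  (forall i, a i < B)%N -> (forall i, a' i < B)%N ->
  (enc b <= enc b')%N -> (enc a <= enc a')%N -> addx b a = addx b' a' ->
  b = b' /\ a = a'.
Proof.
move=> Bb Bb' Ba Ba' le_b le_a /(congr1 enc); rewrite !encD => E.
by split; apply: enc_inj => //; lia.
Qed.

End Encoding.

Lemma exps_bound n (l : seq (exps n)) :
  exists2 B, (0 < B)%N & forall a, a \in l -> forall i, (a i < B)%N.
Proof.
exists (\max_(a <- l) \max_i a i)%N.+1 => // a al i; rewrite ltnS.
apply: leq_trans (leq_bigmax_seq (F := fun a : exps n => \max_i a i)%N a al isT).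
exact: leq_bigmax i.
Qed.

Lemma seq_argmax (T : eqType) (f : T -> nat) (s : seq T) (y : T) :
  y \in s -> exists2 z, z \in s & forall w, w \in s -> (f w <= f z)%N.
Proof.
elim: s y => // a s IH y _; case: s IH => [|b s] IH.
  by exists a => [|w]; rewrite ?mem_head // inE => /eqP ->.
have [z zs zmax] := IH b (mem_head _ _).
case: (leqP (f a) (f z)) => [az|za].
  by exists z => [|w]; rewrite inE ?zs ?orbT // => /predU1P [->|/zmax].
exists a => [|w]; first exact: mem_head.
by rewrite inE => /predU1P [->|/zmax fwz] //; apply: leq_trans fwz (ltnW za).
Qed.

(* Taking b and alpha_k maximal for a
   monomial order, x^(b + alpha_k) occurs exactly once on the left, so it must
   be some x^(alpha_j); maximality of alpha_k then forces b = 0, and hence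
   every exponent in s is 0. *)
Section LeadingTerm.
Variables (R A : nzRingType) (iota : {rmorphism R -> A}) (n : nat) (x : 'I_n -> A).
Hypothesis mon_free : forall (s : seq (exps n)) (c : exps n -> R), uniq s ->
  \sum_(al <- s) iota (c al) * mon x al = 0 -> forall al, al \in s -> c al = 0.

Lemma shifted_exponents_vanish (t : nat) (alpha : 'I_t -> exps n) (k0 : 'I_t)
    (s : seq (exps n)) (E : exps n -> 'I_t -> R) (e : 'I_t -> R) :
  injective alpha -> uniq s -> (forall b k, b \in s -> E b k != 0) ->
  \sum_(b <- s) \sum_(k < t) iota (E b k) * mon x (addx b (alpha k)) =
    \sum_(k < t) iota (e k) * mon x (alpha k) ->
  forall b, b \in s -> b = zerox n.
Proof.
move=> ainj us E_nz Esum b0 b0s.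
have [B B_gt0 Bbound] := exps_bound (s ++ [seq alpha k | k <- index_enum 'I_t]).
have Bs b : b \in s -> forall i, (b i < B)%N by move=> bs; apply: Bbound; rewrite mem_cat bs.
have Ba k i : (alpha k i < B)%N.
  by apply: Bbound; rewrite mem_cat map_f ?mem_index_enum ?orbT.
have [bs bss bsmax] := seq_argmax (@enc B n) b0s.
pose ks := [arg max_(k > k0) enc B (alpha k)].
have ksmax k : (enc B (alpha k) <= enc B (alpha ks))%N.
  by rewrite /ks; case: arg_maxnP => // k1 _ /(_ k isT).
pose g := addx bs (alpha ks).
pose pairs := [seq (b, k) | b <- s, k <- index_enum 'I_t].
have pairs_uniq : uniq pairs.
  by rewrite allpairs_uniq ?index_enum_uniq // => -[? ?] [? ?] _ _ [-> ->].
have Epairs : \sum_(p <- pairs) iota (E p.1 p.2) * mon x (addx p.1 (alpha p.2)) =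
    \sum_(k < t) iota (e k) * mon x (alpha k) by rewrite big_allpairs.
have coef_g := coef_eq mon_free Epairs g.
have top_coef : \sum_(p <- pairs | addx p.1 (alpha p.2) == g) E p.1 p.2 = E bs ks.
  rewrite -(@sum_pred1_uniq _ _ pairs (bs, ks) (fun p => E p.1 p.2)) //; last first.
    by apply: allpairs_f; rewrite ?mem_index_enum.
  rewrite big_seq_cond [RHS]big_seq_cond; apply: eq_bigl => -[b k] /=.
  case: (boolP (_ \in pairs)) => //= /allpairsPdep [b' [k' [b's _ [-> ->]]]].
  apply/eqP/eqP => [|[-> ->] //].
  by case/(addx_max_cancel (Bs _ b's) (Bs _ bss) (Ba k') (Ba ks)
             (bsmax _ b's) (ksmax k')) => -> /ainj ->.
rewrite top_coef in coef_g.
have [j /eqP ajg | no_j] := pickP (fun j => alpha j == g); last first.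
  by move: (E_nz bs ks bss); rewrite coef_g big_pred0 ?eqxx.
have enc_bs : enc B bs = 0%N by have := ksmax j; rewrite ajg encD; lia.
by apply: (enc_eq0 B_gt0); have := bsmax b0 b0s; lia.
Qed.

Lemma shifted_terms_vanish (t : nat) (alpha : 'I_t -> exps n) (k0 : 'I_t)
    (s : seq (exps n)) (F : exps n -> 'I_t -> A) (e : 'I_t -> R) :
  injective alpha -> uniq s ->
  (forall b, b \in s -> forall k,
     exists E, E != 0 /\ F b k = iota E * mon x (addx b (alpha k))) ->
  \sum_(b <- s) \sum_(k < t) F b k = \sum_(k < t) iota (e k) * mon x (alpha k) ->
  forall b, b \in s -> b = zerox n.
Proof.
move=> ainj us HF Esum.
pose good b k E := (b \in s) ==> (E != 0) && (F b k == iota E * mon x (addx b (alpha k))).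
have good_ex b k : exists E, good b k E.
  case: (boolP (b \in s)) => bs; last by exists 0; rewrite /good (negbTE bs).
  by have [E [E_nz /eqP FE]] := HF b bs k; exists E; rewrite /good bs E_nz FE.
pose E b k := xchoose (good_ex b k).
have E_good b k : b \in s -> E b k != 0 /\ F b k = iota (E b k) * mon x (addx b (alpha k)).
  by move=> bs; have /implyP/(_ bs)/andP [-> /eqP ->] := xchooseP (good_ex b k).
apply: (shifted_exponents_vanish k0 (E := E) (e := e) ainj us) => [b k bs|].
  by case: (E_good b k bs).
rewrite -Esum; apply: eq_big_seq => b bs; apply: eq_bigr => k _.
by rewrite (E_good b k bs).2.
Qed.

End LeadingTerm.

Section Twisting.
Variables (R A : nzRingType) (iota : {rmorphism R -> A}).

Definition nz_twisting (y : A) : Prop :=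
  forall r, r != 0 -> exists r', r' != 0 /\ y * iota r = iota r' * y.

Definition onto_twisting (y : A) : Prop :=
  exists tau : R -> R, (forall r, exists r0, tau r0 = r) /\
    forall r, y * iota r = iota (tau r) * y.

Lemma nz_twisting1 : nz_twisting 1.
Proof. by move=> r r0; exists r; rewrite mul1r mulr1. Qed.

Lemma nz_twistingM y z : nz_twisting y -> nz_twisting z -> nz_twisting (y * z).
Proof.
move=> Hy Hz r r0; have [r1 [r10 E1]] := Hz r r0; have [r2 [r20 E2]] := Hy r1 r10.
by exists r2; split => //; rewrite -mulrA E1 mulrA E2 mulrA.
Qed.

Lemma onto_twisting1 : onto_twisting 1.
Proof. by exists id; split => r; [exists r | rewrite mul1r mulr1]. Qed.

Lemma onto_twistingM y z : onto_twisting y -> onto_twisting z -> onto_twisting (y * z).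
Proof.
move=> [t1 [s1 E1]] [t2 [s2 E2]]; exists (t1 \o t2); split => r.
  by have [r1 <-] := s1 r; have [r2 <-] := s2 r1; exists r2.
by rewrite -mulrA E2 mulrA E1 mulrA.
Qed.

Definition nz_multiple (a b : A) : Prop := exists u, u != 0 /\ a = iota u * b.

Lemma nz_multiple_refl a : nz_multiple a a.
Proof. by exists 1; rewrite oner_neq0 rmorph1 mul1r. Qed.

Lemma nz_multiple_trans a b c :
  domain R -> nz_multiple a b -> nz_multiple b c -> nz_multiple a c.
Proof.
move=> dom [u [u0 ->]] [v [v0 ->]]; exists (u * v).
by rewrite domain_mul_neq0 // rmorphM mulrA.
Qed.

Lemma nz_multiple_mull y a b :
  nz_twisting y -> nz_multiple a b -> nz_multiple (y * a) (y * b).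
Proof.
move=> Hy [u [u0 ->]]; have [u' [u'0 E]] := Hy u u0.
by exists u'; rewrite mulrA E mulrA.
Qed.

End Twisting.

(* A monomial is a product
   of the variables along a word; permuting the word only changes the product
   by a nonzero scalar, since adjacent variables commute up to such scalars. *)
Section MonomialProducts.
Variables (R A : nzRingType) (iota : {rmorphism R -> A}) (n : nat) (x : 'I_n -> A).
Hypothesis dom : domain R.
Hypothesis var_twisting : forall i, nz_twisting iota (x i).
Hypothesis var_comm : forall i j, exists c, c != 0 /\ x j * x i = iota c * x i * x j.

Definition wprod (w : seq 'I_n) : A := \prod_(k <- w) x k.

Lemma wprod_cons i w : wprod (i :: w) = x i * wprod w.
Proof. by rewrite /wprod big_cons. Qed.

Lemma wprod_swap i j w :
  nz_multiple iota (wprod [:: j, i & w]) (wprod [:: i, j & w]).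
Proof.
have [c [c0 E]] := var_comm i j.
by exists c; split => //; rewrite !wprod_cons !mulrA E -!mulrA.
Qed.

Lemma wprod_insert a v1 v2 : nz_multiple iota (wprod (a :: v1 ++ v2)) (wprod (v1 ++ a :: v2)).
Proof.
elim: v1 => [|b v1 IH] /=; first exact: nz_multiple_refl.
apply: nz_multiple_trans dom (wprod_swap b a _) _.
by rewrite [wprod (b :: _)]wprod_cons [wprod (b :: _ ++ _)]wprod_cons;
  apply: nz_multiple_mull.
Qed.

Lemma wprod_perm w w' : perm_eq w w' -> nz_multiple iota (wprod w) (wprod w').
Proof.
elim: w w' => [|a w IH] w' pw.
  have -> : w' = [::] by apply/nilP; rewrite /nilp -(perm_size pw).
  exact: nz_multiple_refl.
have aw' : a \in w' by rewrite -(perm_mem pw) mem_head.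
case/splitPr: aw' pw => v1 v2 pw.
apply: nz_multiple_trans dom _ (wprod_insert a v1 v2).
rewrite !wprod_cons; apply: nz_multiple_mull => //; apply: IH.
by rewrite -(perm_cons a); apply: (perm_trans pw); rewrite -cat1s perm_catCA.
Qed.

Definition word_of (al : exps n) : seq 'I_n :=
  flatten [seq nseq (al i) i | i <- index_enum 'I_n].

Lemma mon_word al : mon x al = wprod (word_of al).
Proof.
rewrite /wprod /word_of big_flatten big_map; apply: eq_bigr => i _.
by elim: (al i) => [|k IH]; rewrite ?big_nil ?expr0 // /= big_cons exprS IH.
Qed.

Lemma word_of_addx al be : perm_eq (word_of al ++ word_of be) (word_of (addx al be)).
Proof.
apply/permP => a; rewrite count_cat /word_of !count_flatten !sumnE !big_map.
by rewrite -big_split; apply: eq_bigr => i _; rewrite !count_nseq ffunE mulnDr.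
Qed.

Lemma mon_mul al be : nz_multiple iota (mon x al * mon x be) (mon x (addx al be)).
Proof.
rewrite !mon_word -[_ * _]big_cat.
exact: wprod_perm (word_of_addx al be).
Qed.

Lemma term_mul a b al be : a != 0 -> b != 0 ->
  exists e, e != 0 /\
    iota a * mon x al * (iota b * mon x be) = iota e * mon x (addx al be).
Proof.
move=> a0 b0.
have mon_twisting : nz_twisting iota (mon x al).
  by apply: mon_ind; [apply: nz_twisting1 | apply: nz_twistingM |].
have [b' [b'0 Eb]] := mon_twisting b b0.
have [u [u0 Eu]] := mon_mul al be.
exists (a * b' * u); rewrite !domain_mul_neq0 //.
by rewrite mulrA -(mulrA (iota a)) Eb !mulrA -mulrA Eu !rmorphM !mulrA.
Qed.

End MonomialProducts.

(* Part (i): in a quasi-commutative extension whose twisting maps are onto,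
   every variable, hence every standard monomial, is normal: the elements
   past which x_i can be moved form a subring containing R and all variables. *)
Section NormalMonomials.
Variables (R A : nzRingType) (iota : {rmorphism R -> A}) (n : nat) (x : 'I_n -> A).
Hypothesis span : forall a : A, exists (s : seq (exps n)) (c : exps n -> R),
  a = \sum_(al <- s) iota (c al) * mon x al.
Hypothesis var_onto : forall i, onto_twisting iota (x i).
Hypothesis var_comm : forall i j, exists c, x j * x i = iota c * x i * x j.

Lemma var_normal i : normal_elt (x i).
Proof.
have [sg [sg_onto Esg]] := var_onto i.
split; [apply: (generated_ind (P := passes_left (x i)) span)
       | apply: (generated_ind (P := passes_right (x i)) span)].
- exact: passes_left0.
- exact: passes_leftD.
- exact: passes_leftM.
- by move=> r; have [r0 <-] := sg_onto r; exists (iota r0); rewrite Esg.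
- move=> j; have [c Ec] := var_comm i j; have [c0 Ec0] := sg_onto c.
  by exists (iota c0 * x j); rewrite Ec -Ec0 -Esg mulrA.
- exact: passes_right0.
- exact: passes_rightD.
- exact: passes_rightM.
- by move=> r; exists (iota (sg r)); rewrite Esg.
- by move=> j; have [c Ec] := var_comm j i; exists (iota c * x j); rewrite Ec.
Qed.

Lemma mon_normal al : normal_elt (mon x al).
Proof. exact: mon_ind (@normal1 A) (@normal_mul A) var_normal al. Qed.

End NormalMonomials.

(* From r f = f b (or
   f r = b f) the leading-term argument shows that the cofactor b is a scalar;
   pushing it past the monomials and comparing coefficients gives the
   normality relations for c_k. *)
Section NormalCombination.
Variables (R A : nzRingType) (iota : {rmorphism R -> A}) (n : nat) (x : 'I_n -> A).
Hypothesis dom : domain R.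
Hypothesis span : forall a : A, exists (s : seq (exps n)) (c : exps n -> R),
  a = \sum_(al <- s) iota (c al) * mon x al.
Hypothesis mon_free : forall (s : seq (exps n)) (c : exps n -> R), uniq s ->
  \sum_(al <- s) iota (c al) * mon x al = 0 -> forall al, al \in s -> c al = 0.
Hypothesis var_twisting : forall i, nz_twisting iota (x i).
Hypothesis var_onto : forall i, onto_twisting iota (x i).
Hypothesis var_comm : forall i j, exists c, c != 0 /\ x j * x i = iota c * x i * x j.

Variables (t : nat) (c : 'I_t -> R) (alpha : 'I_t -> exps n).
Hypothesis c_nz : forall k, c k != 0.
Hypothesis alpha_inj : injective alpha.

Local Notation f := (\sum_(k < t) iota (c k) * mon x (alpha k)).

Lemma mon_onto_twisting al : onto_twisting iota (mon x al).
Proof. by apply: mon_ind; [apply: onto_twisting1 | apply: onto_twistingM |]. Qed.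

Lemma push_scalar (D : R) : exists V : 'I_t -> R,
  forall k, mon x (alpha k) * iota D = iota (V k) * mon x (alpha k).
Proof.
have V_ex k : exists v, mon x (alpha k) * iota D == iota v * mon x (alpha k).
  by have [tau [_ Etau]] := mon_onto_twisting (alpha k); exists (tau D); rewrite Etau.
by exists (fun k => xchoose (V_ex k)) => k; apply/eqP/(xchooseP (V_ex k)).
Qed.

Lemma right_cofactor_scalar (k0 : 'I_t) (b : A) (e : 'I_t -> R) :
  f * b = \sum_(k < t) iota (e k) * mon x (alpha k) -> exists D, b = iota D.
Proof.
move=> Efb; apply: (scalar_of_zero_exponents (span b)) => s d us d_nz Eb.
apply: (shifted_terms_vanish mon_free (e := e) (F := fun b k =>
          iota (c k) * mon x (alpha k) * (iota (d b) * mon x b)) k0 alpha_inj us).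
  move=> b1 b1s k; rewrite addxC.
  exact: (term_mul dom var_twisting var_comm (alpha k) b1 (c_nz k) (d_nz b1 b1s)).
by rewrite exchange_big -Efb Eb mulr_suml; apply: eq_bigr => k _; rewrite mulr_sumr.
Qed.

Lemma left_cofactor_scalar (k0 : 'I_t) (b : A) (e : 'I_t -> R) :
  b * f = \sum_(k < t) iota (e k) * mon x (alpha k) -> exists D, b = iota D.
Proof.
move=> Ebf; apply: (scalar_of_zero_exponents (span b)) => s d us d_nz Eb.
apply: (shifted_terms_vanish mon_free (e := e) (F := fun b k =>
          iota (d b) * mon x b * (iota (c k) * mon x (alpha k))) k0 alpha_inj us).
  move=> b1 b1s k.
  exact: (term_mul dom var_twisting var_comm b1 (alpha k) (d_nz b1 b1s) (c_nz k)).
by rewrite -Ebf Eb mulr_suml; apply: eq_bigr => b1 _; rewrite mulr_sumr.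
Qed.

Lemma coef_passes_left (k : 'I_t) :
  (forall a, exists a', a * f = f * a') -> forall r, exists r', r * c k = c k * r'.
Proof.
move=> f_left r; have [b Eb] := f_left (iota r).
have [D ED] : exists D, b = iota D.
  apply: (right_cofactor_scalar k (e := fun k => r * c k)).
  by rewrite -Eb mulr_sumr; apply: eq_bigr => j _; rewrite mulrA rmorphM.
have [V EV] := push_scalar D.
exists (V k).
apply: (coef_eq_inj mon_free (a1 := fun k => r * c k) (a2 := fun k => c k * V k) alpha_inj).
rewrite (eq_bigr (fun j => iota r * (iota (c j) * mon x (alpha j)))) => [|j _].
  rewrite -mulr_sumr Eb ED mulr_suml; apply: eq_bigr => j _.
  by rewrite -mulrA EV mulrA rmorphM.
by rewrite mulrA rmorphM.
Qed.

Lemma coef_passes_right (k : 'I_t) :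
  (forall a, exists a', f * a = a' * f) -> forall r, exists r', c k * r = r' * c k.
Proof.
move=> f_right r; have [tau [tau_onto Etau]] := mon_onto_twisting (alpha k).
have [r0 Er0] := tau_onto r; have [b Eb] := f_right (iota r0).
have [V EV] := push_scalar r0.
have Efr0 : f * iota r0 = \sum_(j < t) iota (c j * V j) * mon x (alpha j).
  by rewrite mulr_suml; apply: eq_bigr => j _; rewrite -mulrA EV mulrA rmorphM.
have [D ED] := left_cofactor_scalar k (etrans (esym Eb) Efr0).
have Vk : V k = r by apply: term_coef_inj mon_free _ _ (alpha k) _; rewrite -EV Etau Er0.
exists D; rewrite -Vk.
apply: (coef_eq_inj mon_free (a1 := fun k => c k * V k) (a2 := fun k => D * c k) alpha_inj).
rewrite -Efr0 Eb ED mulr_sumr; apply: eq_bigr => j _.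
by rewrite mulrA rmorphM.
Qed.

End NormalCombination.

Unset Implicit Arguments.

Theorem proposition4p22 (R A : nzRingType) (iota : {rmorphism R -> A})
    (n : nat) (x : 'I_n -> A) :
  domain R -> left_noetherian R ->
  qc_bijective_skewPBW iota x ->
  (* (i) *)
  (forall (c : R) (alpha : exps n) (h : A),
      is_unit c -> normal_elt c -> central h ->
      normal_elt (iota c * mon x alpha * h)) /\
  (* (ii) *)
  (forall (t : nat) (c : 'I_t -> R) (alpha : 'I_t -> exps n),
      (forall k, c k != 0) -> injective alpha ->
      normal_elt (\sum_(k < t) iota (c k) * mon x (alpha k)) ->
      forall k, normal_elt (c k)).
Proof.
move=> dom _ [_ [span mon_free] var_twisting var_comm_unit var_sigma].
have var_comm i j : exists c, c != 0 /\ x j * x i = iota c * x i * x j.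
  by have [c [c_nz [_ E]]] := var_comm_unit i j; exists c.
have var_onto i : onto_twisting iota (x i).
  have [sg [[sg' _ sgK] E]] := var_sigma i.
  by exists sg; split => // r; exists (sg' r); rewrite sgK.
split.
  move=> c al h c_unit _ h_central.
  apply: normal_mul (central_normal h_central).
  apply: normal_mul (unit_normal (rmorph_is_unit iota c_unit)) _.
  apply: (mon_normal span var_onto) => i j.
  by have [c' [_ E]] := var_comm i j; exists c'.
move=> t c alpha c_nz alpha_inj [f_left f_right] k; split.
  exact: (coef_passes_left dom span mon_free var_twisting var_onto var_comm
            c_nz alpha_inj k f_left).
exact: (coef_passes_right dom span mon_free var_twisting var_onto var_comm
          c_nz alpha_inj k f_right).
Qed.
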